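(* Let $N \geq 5$ be an integer. For an integer $M$ with $0 \leq M \leq \binom{N}{2}$, the pair $(N,M)$ is non-feasible for the family of all line graphs if and only if $M$ belongs to one of the intervals \[\left[ \binom{N-t}{2} +\binom{t+2}{2}, \ \binom{N-t+1}{2}-1 \right] \quad \text{for some integer } t \text{ with } 1 \leq t < \frac{ -5 + \sqrt{8N +17}}{2}.\] (Thus the largest such $t$ is $\left\lfloor \frac{ -5 + \sqrt{8N +17}}{2} \right\rfloor$ if $\frac{ -5 + \sqrt{8N +17}}{2}$ is not an integer, and $\frac{ -5 + \sqrt{8N +17}}{2}-1$ if it is an integer.)
   Context: All graphs are finite and simple. For a graph $G$, $L(G)$ denotes its line graph. For integers $N\ge 1$ and $0 \le M \le \binom{N}{2}$, the pair $(N,M)$ is called feasible (for the family of all line graphs) if there exists a graph $G$ such that $L(G)$ has exactly $N$ vertices and exactly $M$ edges; otherwise $(N,M)$ is non-feasible. For integers $a \le b$, $[a,b]$ denotes the set of integers $p$ with $a \le p \le b$. *)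

From mathcomp Require Import all_boot.
From Stdlib Require Import Reals.

Set Implicit Arguments.
Unset Strict Implicit.
Unset Printing Implicit Defensive.

Definition simple_edges (n : nat) (E : {set {set 'I_n}}) : Prop :=
  forall e, e \in E -> #|e| = 2.

Definition line_graph_edges (n : nat) (E : {set {set 'I_n}})
  : {set {set {set 'I_n}}} :=
  [set [set e; f] | e in E, f in E & (e != f) && ~~ [disjoint e & f]].

Definition feasible (N M : nat) : Prop :=
  exists (n : nat) (E : {set {set 'I_n}}),
    [/\ simple_edges E, #|E| = N & #|line_graph_edges E| = M].

From mathcomp Require Import all_boot.
From Stdlib Require Import Reals.
From mathcomp Require Import zify.
From Stdlib Require Import Lra Classical.

Set Implicit Arguments.
Unset Strict Implicit.
Unset Printing Implicit Defensive.

(* The number of edges of L(G) is the sum over the vertices of G of 'C(deg v, 2).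
   If G has N edges and maximum degree D, this sum is at least 'C(D, 2), at most
   N (D - 1), and, deleting the D edges at a vertex of maximum degree, at most
   'C(D, 2) + 'C(N - D, 2) + 2 (N - D).  For M in the t-th gap the first bound
   forces D + t <= N, the second then rules out D <= t + 1 and the third
   D >= t + 2.
   Conversely, pick D with 'C(D, 2) <= M < 'C(D + 1, 2) and write
   M = 'C(D, 2) + 'C(k + 1, 2) + j with j <= k; outside the gaps one can take
   k <= N - D, and M is realised by a star with D edges, a second star with
   k + 1 edges, one of them joining the two centres and j of them ending at
   leaves of the first star, and N - D - k isolated edges. *)

Lemma bin2S n : 'C(n.+1, 2) = 'C(n, 2) + n.
Proof. by rewrite binS bin1. Qed.

Lemma bin2_sq n : 'C(n, 2) * 2 + n = n * n.
Proof.
by rewrite muln2 bin2 even_halfK ?oddM; case: n => //= n; [lia | rewrite andNb].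
Qed.

Lemma bin2_le2 x : x <= 2 -> 'C(x, 2) = (x == 2).
Proof. by case: x => [|[|[|]]]. Qed.

Lemma leq_of_bin2_ltn a b : 'C(a, 2) < 'C(b.+1, 2) -> a <= b.
Proof. by apply: contraTT; rewrite -!ltnNge ltnS => /(leq_bin2l 2). Qed.

Lemma bin2_floor M : exists2 D, 'C(D, 2) <= M & M < 'C(D.+1, 2).
Proof.
elim: M => [|M [D lo hi]]; first by exists 1.
have [hi' | eq_hi] := ltnP M.+1 'C(D.+1, 2); first by exists D => //; lia.
by exists D.+1 => //; rewrite bin2S; lia.
Qed.

Lemma sum_nat_indicator m n a b :
  \sum_(m <= i < n) (a <= i < b : nat) = minn n b - maxn m a.
Proof.
elim: n => [|n IHn]; first by rewrite big_geq //; lia.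
have [mn | nm] := leqP m n; first by rewrite big_nat_recr //= IHn; lia.
by rewrite big_geq //; lia.
Qed.

Lemma sum_indicator_card (T : finType) (A : {pred T}) (P : pred T) :
  \sum_(x in A) (P x : nat) = #|[set x in A | P x]|.
Proof.
rewrite -sum1_card big_mkcond [RHS]big_mkcond /=; apply: eq_bigr => x _.
by rewrite inE; case: (x \in A); case: (P x).
Qed.

Section LineGraphSize.
Variable n : nat.
Implicit Types (E B : {set {set 'I_n}}) (e f : {set 'I_n}) (u v : 'I_n).

Definition star E u := [set e in E | u \in e].
Definition deg E u := #|star E u|.

Lemma card_setI_adjacent e f : #|e| = 2 -> #|f| = 2 -> e != f ->
  ~~ [disjoint e & f] -> #|e :&: f| = 1.
Proof.
move=> ce cf nef; rewrite -setI_eq0 -card_gt0 => ef_gt0.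
have : #|e :&: f| <= 2 by rewrite -ce subset_leq_card ?subsetIl.
suff : #|e :&: f| != 2 by lia.
apply: contra nef => /eqP ef2.
have /eqP eI : e :&: f == e by rewrite eqEcard subsetIl ce ef2.
have /eqP fI : e :&: f == f by rewrite eqEcard subsetIr cf ef2.
by rewrite -eI fI.
Qed.

Lemma line_edge_in_one_star E B : simple_edges E -> B \in line_graph_edges E ->
  \sum_u (B \subset star E u : nat) = 1.
Proof.
move=> sE /imset2P [e f eE]; rewrite inE => /andP [fE /andP [nef ef]] ->.
rewrite -(card_setI_adjacent (sE _ eE) (sE _ fE) nef ef).
rewrite sum_indicator_card; apply: eq_card => u.
by rewrite !inE subUset !sub1set !inE eE fE.
Qed.

Lemma line_edges_in_star E u :
  [set B in line_graph_edges E | B \subset star E u] =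
  [set B : {set {set 'I_n}} | B \subset star E u & #|B| == 2].
Proof.
apply/setP => B; rewrite !inE; apply/andP/andP.
  case=> /imset2P [e f _ + ->]; rewrite inE => /andP [_ /andP [nef _]] eu.
  by rewrite cards2 nef.
case=> Bu /cards2P [e [f [nef eB]]]; split => //; move: Bu.
rewrite eB subUset !sub1set !inE => /andP [/andP [eE ue] /andP [fE uf]].
apply/imset2P; exists e f => //; rewrite inE fE nef /=.
by apply/negP => /disjointFr /(_ ue); rewrite uf.
Qed.

Lemma card_line_graph_edges E : simple_edges E ->
  #|line_graph_edges E| = \sum_u 'C(deg E u, 2).
Proof.
move=> sE; rewrite -sum1_card.
under eq_bigr => B BL do rewrite -(line_edge_in_one_star sE BL).
rewrite exchange_big; apply: eq_bigr => u _.
by rewrite sum_indicator_card line_edges_in_star cards_draws.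
Qed.

Lemma sum_deg E : simple_edges E -> \sum_u deg E u = 2 * #|E|.
Proof.
move=> sE; under eq_bigr => u _ do rewrite /deg -sum_indicator_card.
rewrite exchange_big -sum1_card big_distrr /=; apply: eq_bigr => e eE.
by rewrite sum_indicator_card muln1 -(sE _ eE); apply: eq_card => u; rewrite inE.
Qed.

Lemma card_line_graph_edges_le E : #|line_graph_edges E| <= 'C(#|E|, 2).
Proof.
rewrite -cards_draws subset_leq_card //; apply/subsetP => B /imset2P [e f eE].
rewrite inE => /andP [fE /andP [nef _]] ->.
by rewrite inE subUset !sub1set eE fE cards2 nef.
Qed.

Lemma card_line_graph_edges_max_deg E D : simple_edges E ->
  (forall u, deg E u <= D) -> #|line_graph_edges E| <= #|E| * D.-1.
Proof.
move=> sE degD; rewrite -(leq_pmul2r (ltn0Sn 1)) card_line_graph_edges //.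
rewrite [X in _ <= X]mulnAC [#|E| * 2]mulnC -sum_deg // !big_distrl /=.
apply: leq_sum => u _; have := bin2_sq (deg E u); have := degD u; nia.
Qed.

Lemma card_line_graph_edges_star E v : simple_edges E ->
  #|line_graph_edges E| <=
    'C(deg E v, 2) + 'C(#|E| - deg E v, 2) + 2 * (#|E| - deg E v).
Proof.
move=> sE; set H := E :\: star E v.
have sH : simple_edges H by move=> e; rewrite inE => /andP [_ /sE].
have cH : #|H| = #|E| - deg E v.
  by rewrite cardsD (setIidPr _) //; apply/subsetP => e; rewrite inE => /andP [].
have degH u : u != v -> deg E u <= (deg H u).+1.
  move=> nuv; rewrite -add1n -(cards1 [set u; v]); apply: leq_trans (leq_card_setU _ _).
  apply: subset_leq_card; apply/subsetP => e; rewrite !inE => /andP [eE ue].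
  have [ve | _] := boolP (v \in e); last by rewrite andbF eE ue orbT.
  by rewrite andbT eE orbF eq_sym eqEcard subUset !sub1set ue ve (sE _ eE) cards2 nuv.
rewrite card_line_graph_edges // (bigD1 v) //= -addnA leq_add2l -cH.
apply: (@leq_trans (\sum_u ('C(deg H u, 2) + deg H u))).
  rewrite [X in _ <= X](bigD1 v) //=; apply: leq_trans (leq_addl _ _).
  by apply: leq_sum => u nuv; rewrite -bin2S leq_bin2l ?degH.
rewrite big_split /= sum_deg // -card_line_graph_edges // leq_add2r.
exact: card_line_graph_edges_le.
Qed.

End LineGraphSize.

Lemma max_deg_bound_lt_gap N t : 0 < t -> t * t + 5 * t + 2 < 2 * N ->
  N * t < 'C(N - t, 2) + 'C(t + 2, 2).
Proof.
move=> t_gt0 tN.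
have [m eN] : exists m, N = t + m by exists (N - t); lia.
subst N; rewrite addKn.
have := bin2_sq m; have := bin2_sq (t + 2).
(* tN multiplied by m and by t^2 - t + 1: the certificate nia does not find alone *)
have h1 : (t * t + 3 * t + 3) * m <= 2 * m * m by nia.
have h2 : (t * t + 3 * t + 3) * (t * t - t + 1) <= 2 * m * (t * t - t + 1) by nia.
nia.
Qed.

Lemma star_bound_lt_gap N t D : t + 2 <= D -> D + t <= N ->
  'C(D, 2) + 'C(N - D, 2) + 2 * (N - D) < 'C(N - t, 2) + 'C(t + 2, 2).
Proof.
move=> tD DN.
have [q eD] : exists q, D = t + 2 + q by exists (D - (t + 2)); lia.
have [p eN] : exists p, N = D + t + p by exists (N - (D + t)); lia.
subst N D.
have -> : t + 2 + q + t + p - (t + 2 + q) = t + p by lia.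
have -> : t + 2 + q + t + p - t = t + 2 + q + p by lia.
have := bin2_sq (t + 2 + q + p); have := bin2_sq (t + 2).
have := bin2_sq (t + p); have := bin2_sq (t + 2 + q).
lia.
Qed.

Lemma not_feasible_in_gap N M t : 0 < t -> t * t + 5 * t + 2 < 2 * N ->
  'C(N - t, 2) + 'C(t + 2, 2) <= M <= 'C(N - t + 1, 2) - 1 -> ~ feasible N M.
Proof.
move=> t_gt0 tN /andP [lo hi] [n [E [sE cE cM]]]; subst N M.
have [e eE] : exists e, e \in E by apply/card_gt0P; lia.
have [u0 _] : exists u0, u0 \in e by apply/card_gt0P; rewrite (sE _ eE).
have [v _ vmax] := @arg_maxnP _ u0 xpredT (deg E) isT.
have lo_deg : 'C(deg E v, 2) <= #|line_graph_edges E|.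
  by rewrite card_line_graph_edges // (bigD1 v) //= leq_addr.
have deg_le : deg E v <= #|E| - t.
  by apply: leq_of_bin2_ltn; have := bin_gt0 (t + 2) 2; rewrite addn1 in hi; lia.
have [small | large] := leqP (deg E v) t.+1.
  have := card_line_graph_edges_max_deg sE (fun u => vmax u isT).
  have := max_deg_bound_lt_gap t_gt0 tN.
  have : #|E| * (deg E v).-1 <= #|E| * t by apply: leq_mul => //; lia.
  lia.
have := card_line_graph_edges_star v sE.
have := @star_bound_lt_gap #|E| t (deg E v); lia.
Qed.

Definition pair_deg (l : seq (nat * nat)) w :=
  count (fun p : nat * nat => (p.1 == w) || (p.2 == w)) l.

Lemma pair_deg_cat l1 l2 w : pair_deg (l1 ++ l2) w = pair_deg l1 w + pair_deg l2 w.
Proof. exact: count_cat. Qed.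

Section PairGraph.
Variable n : nat.

Definition pair_ok (p : nat * nat) := p.1 < p.2 <= n.
Definition pair_edge (p : nat * nat) : {set 'I_n.+1} := [set inord p.1; inord p.2].

Lemma mem_pair_edge p (u : 'I_n.+1) : pair_ok p ->
  (u \in pair_edge p) = (p.1 == u) || (p.2 == u).
Proof.
by case/andP => lt12 le2n; rewrite !inE -!val_eqE /= !inordK ?(eq_sym (val u)) //; lia.
Qed.

Lemma card_pair_edge p : pair_ok p -> #|pair_edge p| = 2.
Proof.
case/andP => lt12 le2n; rewrite cards2 -val_eqE /= !inordK ?(ltn_eqF lt12) //; lia.
Qed.

Lemma pair_edge_inj : {in pair_ok &, injective pair_edge}.
Proof.
move=> [a b] [c d]; rewrite !unfold_in /pair_ok /= => /andP [ab bn] /andP [cd dn] eq_edge.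
have mem_cd x : x <= n -> inord x \in pair_edge (a, b) -> (c == x) || (d == x).
  by move=> xn; rewrite eq_edge mem_pair_edge /pair_ok ?cd //= inordK.
move: (mem_cd a (ltnW (leq_trans ab bn)) (setU11 _ _)) (mem_cd b bn (setU1r _ (set11 _))).
by move=> /orP [] /eqP ca /orP [] /eqP cb; congr (_, _); lia.
Qed.

Lemma feasible_pairs l : all pair_ok l -> uniq l ->
  feasible (size l) (\sum_(u < n.+1) 'C(pair_deg l u, 2)).
Proof.
move=> /allP okl ul.
have simpleE : simple_edges [set:: map pair_edge l].
  by move=> e; rewrite inE => /mapP [p /okl okp ->]; apply: card_pair_edge.
have uniqE : uniq (map pair_edge l).
  by rewrite map_inj_in_uniq // => p q /okl okp /okl okq; apply: pair_edge_inj.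
exists n.+1, [set:: map pair_edge l]; split => //.
  by rewrite cardsE (card_uniqP uniqE) size_map.
rewrite card_line_graph_edges //; apply: eq_bigr => u _; congr 'C(_, 2); rewrite /deg.
have -> : star [set:: map pair_edge l] u =
          [set:: [seq e : {set 'I_n.+1} <- map pair_edge l | u \in e]].
  by apply/setP => e; rewrite !inE mem_filter andbC.
rewrite cardsE (card_uniqP (filter_uniq _ uniqE)) size_filter count_map.
by apply: eq_in_count => p /okl okp; rewrite /= mem_pair_edge.
Qed.

End PairGraph.

Definition star_pairs (c m len : nat) := [seq (c, w) | w <- iota m len].
Definition matching_pairs (b r : nat) := [seq (b + i.*2, (b + i.*2).+1) | i <- iota 0 r].

Lemma pair_deg_star c m len w :
  pair_deg (star_pairs c m len) w = if c == w then len else m <= w < m + len.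
Proof.
rewrite /pair_deg count_map; have [<- | ncw] := eqVneq c w.
  by rewrite (eq_count (a2 := predT)) ?count_predT ?size_iota // => u /=; rewrite eqxx.
rewrite -mem_iota -(count_uniq_mem w (iota_uniq m len)); apply: eq_count => u /=.
by rewrite (negbTE ncw) eq_sym.
Qed.

Lemma pair_deg_matching b r w : pair_deg (matching_pairs b r) w = (b <= w < b + r.*2).
Proof.
elim: r => [|r IHr]; first by rewrite /pair_deg /=; lia.
rewrite /pair_deg /matching_pairs -addn1 iotaD map_cat count_cat -/(pair_deg _ _) IHr /=.
by case: eqP; case: eqP => /=; lia.
Qed.

Definition double_star_pairs D k j r :=
  star_pairs 0 1 D ++ star_pairs 1 (D.+1 - j) k ++ matching_pairs (D.+1 - j + k) r.

Lemma bin2_pair_deg_double_star D k j r w : j <= k -> j < D ->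
  'C(pair_deg (double_star_pairs D k j r) w, 2) =
  if w == 0 then 'C(D, 2) else if w == 1 then 'C(k.+1, 2) else D.+1 - j <= w < D.+1.
Proof.
move=> jk jD; rewrite !pair_deg_cat !pair_deg_star pair_deg_matching.
case: w => [|[|w]] /=; try by congr 'C(_, 2); lia.
rewrite bin2_le2; lia.
Qed.

Lemma feasible_double_star D k j r : j <= k -> j < D ->
  feasible (D + k + r) ('C(D, 2) + 'C(k.+1, 2) + j).
Proof.
move=> jk jD; set l := double_star_pairs D k j r.
have okl : all (pair_ok (D + k + r.*2)) l.
  rewrite !all_cat; apply/and3P; split; apply/allP => p /mapP [i];
    by rewrite mem_iota /pair_ok => ? -> /=; lia.
have ul : uniq l.
  rewrite !cat_uniq !map_inj_uniq ?iota_uniq /=; first last.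
  - by move=> x y [] ->.
  - by move=> x y [] ->.
  - by move=> x y [] ? _; lia.
  rewrite andbT; apply/andP; split.
    apply/hasPn => p; rewrite mem_cat => /orP [] /mapP [u _ ->];
      by apply/negP => /mapP [v _] [] /=; lia.
  by apply/hasPn => p /mapP [u _ ->]; apply/negP => /mapP [v _] [] /=; lia.
have := feasible_pairs okl ul; rewrite !size_cat !size_map !size_iota addnA.
suff -> : \sum_(u < (D + k + r.*2).+1) 'C(pair_deg l u, 2) = 'C(D, 2) + 'C(k.+1, 2) + j.
  by [].
rewrite -(big_mkord xpredT (fun u => 'C(pair_deg l u, 2))) big_ltn // big_ltn; last by lia.
rewrite !bin2_pair_deg_double_star //= addnA.
rewrite (eq_big_nat _ _ (F2 := fun i => (D.+1 - j <= i < D.+1 : nat))); last first.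
  by case=> [|[|i]] //; rewrite bin2_pair_deg_double_star.
by rewrite sum_nat_indicator; congr (_ + _); lia.
Qed.

Lemma feasible_outside_gaps N M : 0 < N -> M <= 'C(N, 2) ->
  (forall t, 0 < t -> t * t + 5 * t + 2 < 2 * N ->
     ~ ('C(N - t, 2) + 'C(t + 2, 2) <= M <= 'C(N - t + 1, 2) - 1)) ->
  feasible N M.
Proof.
move=> N_gt0 MN no_gap.
have [D loD hiD] := bin2_floor M; rewrite bin2S in hiD.
have DN : D <= N by apply: leq_of_bin2_ltn; rewrite bin2S; lia.
have [s eN] : exists s, N = D + s by exists (N - D); lia.
have [x eM] : exists x, M = 'C(D, 2) + x by exists (M - 'C(D, 2)); lia.
subst N M.
have x_small : x < 'C(s + 2, 2).
  have [s0 | s_gt0] := posnP s; first by move: MN; rewrite s0 addn0 add0n binn; lia.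
  have [sN | Ns] := ltnP (s * s + 5 * s + 2) (2 * (D + s)).
    by have := no_gap s s_gt0 sN; rewrite addnK addn1 bin2S; lia.
  by have := bin2_sq (s + 2); lia.
have [[|k] loK hiK] := bin2_floor x; rewrite bin2S in hiK; first by lia.
have ks : k <= s by rewrite -ltnS; apply: leq_of_bin2_ltn; rewrite addn2 in x_small; lia.
have := @feasible_double_star D k (x - 'C(k.+1, 2)) (s - k).
by rewrite -addnA subnKC // -addnA subnKC //; apply; lia.
Qed.

Lemma sqrt_bound_iff N t :
  (INR t < (-5 + sqrt (INR (8 * N + 17))) / 2)%R <-> t * t + 5 * t + 2 < 2 * N.
Proof.
have -> : t * t + 5 * t + 2 < 2 * N <->
          (INR ((2 * t + 5) * (2 * t + 5)) < INR (8 * N + 17))%R.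
  by split => [? | /INR_lt /ltP]; [apply/lt_INR/ltP | ]; lia.
have pos_t := pos_INR t.
(* keep K folded so that only the left-hand side gets expanded *)
set K := INR (8 * N + 17).
rewrite -multE -plusE !mult_INR plus_INR mult_INR /=.
split => h.
- by apply: sqrt_lt_0_alt; rewrite sqrt_square; lra.
- by have := sqrt_lt_1_alt _ _ (conj (Rle_0_sqr _) h); rewrite sqrt_square; lra.
Qed.

Theorem theorem1 (N M : nat) :
  5 <= N -> M <= 'C(N, 2) ->
  (~ feasible N M <->
   exists t : nat,
     [/\ 1 <= t,
         (INR t < (-5 + sqrt (INR (8 * N + 17))) / 2)%R
       & 'C(N - t, 2) + 'C(t + 2, 2) <= M <= 'C(N - t + 1, 2) - 1]).
Proof.
move=> N_ge5 MN; split => [infeasible | [t [t_gt0 /sqrt_bound_iff tN gap]]].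
  apply: NNPP => no_gap; apply: infeasible.
  apply: feasible_outside_gaps => // [|t t_gt0 tN gap]; first by lia.
  by apply: no_gap; exists t; split => //; apply/sqrt_bound_iff.
exact: not_feasible_in_gap t_gt0 tN gap.
Qed.
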